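(* For all $i=1,\dots,r$, under the free field action of $\hat{\mathfrak g}$ on $M_N\otimes\hat\pi^{k-k_c}_N$ described in the context, \[h_{i,N}|0\rangle'=b_{i,N}|0\rangle',\] where $|0\rangle'=|0\rangle\otimes|0\rangle$ and $h_{i,N}=h_{\alpha_i}\otimes t^N$.
   Context: Let $\mathfrak g$ be a simple complex Lie algebra with triangular decomposition $\mathfrak g=\mathfrak u_-\oplus\mathfrak h\oplus\mathfrak u$, positive roots $\Delta_+$, simple roots $\alpha_1,\dots,\alpha_r$, $h_i=h_{\alpha_i}$ the coroots. Let $(x,y)=\frac{1}{2h^\vee}\mathrm{tr}(\mathrm{ad}_x\mathrm{ad}_y)$, $k_c=-h^\vee$, and $\hat{\mathfrak g}=\mathfrak g\otimes\mathbb C((t))\oplus\mathbb C\mathbf 1$ the affine Kac–Moody algebra with $[x_1\otimes g_1,x_2\otimes g_2]=[x_1,x_2]\otimes g_1g_2+(x_1,x_2)\mathrm{Res}_t(g_1dg_2)\mathbf 1$. Fix $N\ge1$. $\mathcal A$ is generated by $a_{\alpha,n},a^*_{\alpha,n}$ ($\alpha\in\Delta_+,n\in\mathbb Z$) with $[a_{\alpha,n},a^*_{\beta,m}]=\delta_{\alpha\beta}\delta_{n,-m}$, others zero; $M_N$ is the $\mathcal A$-module generated by $|0\rangle$ with $a_{\alpha,n}|0\rangle=0$ ($n\ge N$), $a^*_{\alpha,n}|0\rangle=0$ ($n\ge0$). $\hat{\mathfrak h}_\kappa$ has basis $b_{i,n}$, central $\mathbf 1$, $[b_{i,n},b_{j,m}]=-n\kappa(h_i,h_j)\delta_{n,-m}\mathbf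 1$; $\hat\pi^\kappa_N$ is generated by $|0\rangle$ with $b_{i,n}|0\rangle=0$ ($n>N$), $\mathbf 1=1$. In the free field realization, the field $h_i(z)=\sum_n(h_i\otimes t^n)z^{-n-1}$ acts on $M_N\otimes\hat\pi^{k-k_c}_N$ by $-\sum_{\beta\in\Delta_+}\beta(h_i){:}a^*_\beta(z)a_\beta(z){:}+b_i(z)$, where $a_\beta(z)=\sum a_{\beta,n}z^{-n-1}$, $a^*_\beta(z)=\sum a^*_{\beta,n}z^{-n}$, $b_i(z)=\sum b_{i,n}z^{-n-1}$ and normal ordering moves $a_{\beta,n}$ ($n\ge0$) and $a^*_{\beta,m}$ ($m>0$) to the right. *)

From HB Require Import structures.
From mathcomp Require Import all_boot all_order all_algebra.
Set Implicit Arguments. Unset Strict Implicit. Unset Printing Implicit Defensive.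
Import Order.TTheory GRing.Theory Num.Theory.
Local Open Scope ring_scope.

(* Operators on a module V over C: modes indexed by roots (D) or by
   coroot indices ('I_r), and by integers n. *)

Definition kdelta {C : nzRingType} (b : bool) : C := if b then 1 else 0.

(** Normally ordered mode term  :a*_{beta,m} a_{beta,n}:  with m = N - n,
    i.e. the contribution to the z^{-N-1} coefficient of :a*_beta(z) a_beta(z):.
    Normal ordering moves a_{beta,n} (n >= 0) and a*_{beta,m} (m > 0) to the
    right: when n < 0 and m > 0 the order is swapped to a_{beta,n} a*_{beta,m};
    otherwise (the two operators being already in order, or commuting) the
    product is a*_{beta,m} a_{beta,n}. *)
Definition nterm {C : nzRingType} {V : lmodType C} {D : Type}
  (a astar : D -> int -> V -> V) (beta : D) (N n : int) (v : V) : V :=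
  let m := N - n in
  if (n < 0) && (0 < m) then a beta n (astar beta m v)
  else astar beta m (a beta n v).

Definition window_sum {C : nzRingType} {V : lmodType C} (f : int -> V) (K : nat) : V :=
  \sum_(k < (2 * K).+1) f (k%:Z - K%:Z).

(** [f] is summable over Z with sum [s] (partial sums are eventually equal
    to s; this is the topology in which mode expansions of fields act on
    smooth modules). *)
Definition sums_to {C : nzRingType} {V : lmodType C} (f : int -> V) (s : V) : Prop :=
  exists K0 : nat, forall K : nat, (K0 <= K)%N -> window_sum f K = s.

(** [h_mode_act ... i N v w] : the mode h_{i,N} = h_{alpha_i} (x) t^N of the field
    h_i(z) = - sum_{beta in Delta_+} beta(h_i) :a*_beta(z) a_beta(z): + b_i(z)
    sends v to w.  Here [c beta i] stands for beta(h_i). *)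
Definition h_mode_act {C : nzRingType} {V : lmodType C} {D : finType} {r : nat}
  (a astar : D -> int -> V -> V) (b : 'I_r -> int -> V -> V)
  (c : D -> 'I_r -> C) (i : 'I_r) (N : int) (v w : V) : Prop :=
  exists s : V,
    sums_to (fun n => \sum_(beta : D) c beta i *: nterm a astar beta N n v) s /\
    w = - s + b i N v.

From HB Require Import structures.
From mathcomp Require Import all_boot all_order all_algebra.
Import Order.TTheory GRing.Theory Num.Theory.
Local Open Scope ring_scope.
Set Implicit Arguments.
Unset Strict Implicit.
Unset Printing Implicit Defensive.

(* Every normally ordered term of the z^{-N-1} coefficient of :a*_beta(z) a_beta(z):
   kills the vacuum: either its rightmost factor is an annihilator a_{beta,n} with
   n >= N or a*_{beta,m} with m > 0, or it is a*_{beta,N-n} a_{beta,n} with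
   0 <= n < N, which equals a_{beta,n} a*_{beta,N-n} because n + (N - n) = N != 0.
   Hence the sum defining h_{i,N}|0>' vanishes and only b_{i,N}|0>' survives. *)

Lemma sums_to0 {C : nzRingType} {V : lmodType C} (f : int -> V) :
  (forall n, f n = 0) -> sums_to f 0.
Proof.
by move=> f0; exists 0%N => K _; apply: big1 => k _; rewrite f0.
Qed.

Section NormalOrderedVacuum.

Variables (C : nzRingType) (V : lmodType C) (D : eqType).
Variables (a astar : D -> int -> {linear V -> V}) (N : int) (vac : V).

Hypothesis N_neq0 : N != 0.
Hypothesis a_astar_comm : forall beta n m v,
  a beta n (astar beta m v) - astar beta m (a beta n v)
  = kdelta (n == - m) *: v.
Hypothesis a_vac : forall beta n, N <= n -> a beta n vac = 0.
Hypothesis astar_vac : forall beta m, 0 <= m -> astar beta m vac = 0.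

Lemma nterm_vac_eq0 beta n :
  nterm (fun al n => a al n) (fun al n => astar al n) beta N n vac = 0.
Proof.
rewrite /nterm; case: ifP => [/andP[_ m_gt0] | not_swapped].
  by rewrite astar_vac ?raddf0 // ltW.
have [N_le_n | n_lt_N] := lerP N n; first by rewrite a_vac // raddf0.
have m_gt0 : 0 < N - n by rewrite subr_gt0.
have n_ge0 : 0 <= n.
  by rewrite leNgt; apply: contraFN not_swapped => n_lt0; rewrite n_lt0 m_gt0.
have n_neq_Nm : (n == - (N - n)) = false.
  by rewrite opprB -subr_eq0 opprB addrC subrK; exact: negbTE.
apply/eqP; rewrite -oppr_eq0.
have := a_astar_comm beta n (N - n) vac.
by rewrite astar_vac ?ltW // raddf0 sub0r n_neq_Nm scale0r => ->.
Qed.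

End NormalOrderedVacuum.

Theorem mainTheorem9
  (C : numClosedFieldType)          (* the complex numbers *)
  (D : finType)                     (* the positive roots Delta_+ *)
  (r : nat)                         (* the rank; coroots h_i, i : 'I_r *)
  (c : D -> 'I_r -> C)              (* c beta i = beta(h_i) *)
  (kap : 'I_r -> 'I_r -> C)         (* kap i j = (k - k_c) (h_i, h_j) *)
  (N : nat) (HN : (1 <= N)%N)
  (V : lmodType C)                  (* the module M_N (x) hat-pi^{k-k_c}_N *)
  (a astar : D -> int -> {linear V -> V})
  (b : 'I_r -> int -> {linear V -> V})
  (vac : V)                         (* |0>' = |0> (x) |0> *)
  (* Weyl algebra A relations *)
  (Haas : forall al be n m v,
      a al n (astar be m v) - astar be m (a al n v)
      = kdelta ((al == be) && (n == - m)) *: v)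
  (Haa : forall al be n m v, a al n (a be m v) = a be m (a al n v))
  (Hss : forall al be n m v, astar al n (astar be m v) = astar be m (astar al n v))
  (* Heisenberg algebra hat-h_kappa relations, central element acting by 1 *)
  (Hbb : forall i j n m v,
      b i n (b j m v) - b j m (b i n v)
      = (- n%:~R * kap i j * kdelta (n == - m)) *: v)
  (* the two tensor factors commute *)
  (Hab : forall al i n m v, a al n (b i m v) = b i m (a al n v))
  (Hsb : forall al i n m v, astar al n (b i m v) = b i m (astar al n v))
  (* vacuum conditions *)
  (Hva : forall al n, (N%:Z <= n) -> a al n vac = 0)
  (Hvs : forall al n, (0 <= n) -> astar al n vac = 0)
  (Hvb : forall i n, (N%:Z < n) -> b i n vac = 0)
  (i : 'I_r) :
  h_mode_act (fun al n => a al n) (fun al n => astar al n) (fun j n => b j n)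
    c i N%:Z vac (b i N%:Z vac).
Proof.
have N_neq0 : N%:Z != 0 by rewrite eqz_nat -lt0n.
have a_astar_comm beta n m v :
    a beta n (astar beta m v) - astar beta m (a beta n v)
    = kdelta (n == - m) *: v by rewrite Haas eqxx.
exists 0; split; last by rewrite oppr0 add0r.
apply: sums_to0 => n; apply: big1 => beta _.
by rewrite (nterm_vac_eq0 N_neq0 a_astar_comm Hva Hvs) scaler0.
Qed.
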